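(* Under Friends Appreciation, let $\mathcal{N}_1=\{i\in\mathcal{N}: |F_i|=1\}$ and let $G_1^f=(\mathcal{N},F_1)$ with $F_1=\{(i,j): i\in\mathcal{N}_1,\ j\in F_i\}$. Let $\pi$ be the partition of $\mathcal{N}$ into the vertex sets of the weakly connected components of $G_1^f$ (this is the unique minimal-by-refinement partition guaranteeing $\textsc{oneF}$ for all agents in $\mathcal{N}_1$). Then for every $i\in\mathcal{N}_1$ we have $u_i(\pi)\ge\mathrm{opt}$, and $\pi(i)\subseteq\pi^*(i)$ for every partition $\pi^*$ maximizing the egalitarian welfare.
   Context: A friends-and-enemies instance consists of a set of agents $\mathcal{N}=\{1,\dots,n\}$ and, for each agent $i$, a nonempty set of friends $F_i\subseteq \mathcal{N}\setminus\{i\}$; the enemies of $i$ are $E_i=\mathcal{N}\setminus(F_i\cup\{i\})$. An outcome is a partition $\pi$ of $\mathcal{N}$; $\pi(i)$ is the coalition containing $i$. Under Friends Appreciation, $u_i(C)=|C\cap F_i|-\frac{1}{n}|C\cap E_i|$ for $C\ni i$, $u_i(\pi)=u_i(\pi(i))$, $\mathsf{ESW}(\pi)=\min_i u_i(\pi)$, and $\mathrm{opt}$ is the maximum $\mathsf{ESW}$. A coalition $C$ satisfies $\textsc{oneF}$ for agent $i\in C$ if $C\cap F_i\neq\emptyset$. A partition $\pi$ guarantees $\textsc{oneF}$ for $A\subseteq\mathcal{N}$ if every coalition satisfies $\textsc{oneF}$ for each of its members in $A$; it is minimal-by-refinement with this property if no coalition of $\pi$ can be split into several nonempty coalitions while the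 resulting partition still guarantees $\textsc{oneF}$ for $A$. *)

From HB Require Import structures.
From mathcomp Require Import all_boot all_order all_algebra.
Set Implicit Arguments. Unset Strict Implicit. Unset Printing Implicit Defensive.
Import Order.TTheory GRing.Theory Num.Theory.
Local Open Scope ring_scope.

Section FE.
Variable n : nat.
Variable F : 'I_n -> {set 'I_n}.

Definition enemies (i : 'I_n) : {set 'I_n} := ~: (F i :|: [set i]).

Definition uFA (i : 'I_n) (C : {set 'I_n}) : rat :=
  (#|C :&: F i|)%:R - (#|C :&: enemies i|)%:R / n%:R.

Definition is_partition (P : {set {set 'I_n}}) : bool := partition P [set: 'I_n].

Definition uP (P : {set {set 'I_n}}) (i : 'I_n) : rat := uFA i (pblock P i).

(* egalitarian welfare: min over agents. The seed n%:R is a strict upper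
   bound for all utilities (utility <= n-1), so it never affects the minimum
   when n >= 1. *)
Definition ESW (P : {set {set 'I_n}}) : rat :=
  \big[Num.min/n%:R]_(i : 'I_n) uP P i.

(* opt = maximum ESW over all partitions; seeded with the ESW of the grand
   coalition, itself a partition when n >= 1 *)
Definition opt : rat :=
  \big[Num.max/ESW [set [set: 'I_n]]]_(P : {set {set 'I_n}} | is_partition P) ESW P.

Definition optimal (P : {set {set 'I_n}}) : bool := is_partition P && (ESW P == opt).

Definition N1 : {set 'I_n} := [set i | #|F i| == 1%N].

Definition F1edge : rel 'I_n := fun i j => (i \in N1) && (j \in F i).
Definition weak_edge : rel 'I_n := fun i j => F1edge i j || F1edge j i.

Definition wcc_partition : {set {set 'I_n}} :=
  equivalence_partition (connect weak_edge) [set: 'I_n].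
End FE.

From HB Require Import structures.
From mathcomp Require Import all_boot all_order all_algebra.
Import Order.TTheory GRing.Theory Num.Theory.
Set Implicit Arguments. Unset Strict Implicit. Unset Printing Implicit Defensive.
Local Open Scope ring_scope.

(* Everyone has a friend, so the grand coalition gives everyone positive
   utility and hence opt > 0.  Under Friends Appreciation a coalition with no
   friend of i gives i non-positive utility, so in an optimal partition every
   agent of N1 shares its block with its unique friend: optimal partitions are
   coarser than the components of G_1^f.  Conversely the component of i in N1
   already contains the only friend of i, and shrinking a coalition without
   losing friends can only raise utility, so u_i(pi) is at least
   the utility of i in any optimal partition, which is at least opt. *)

Section FriendsAppreciation.
Variable n : nat.
Variable F : 'I_n -> {set 'I_n}.
Hypothesis F_neq0 : forall i, F i != set0.

Lemma ESW_le_uP P i : ESW F P <= uP F P i.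
Proof. by rewrite /ESW (bigD1 i) //= ge_min lexx. Qed.

Lemma optimal_exists (i0 : 'I_n) : exists P, optimal F P.
Proof.
suff [P P_part P_opt] : exists2 P, is_partition P & ESW F P = opt F.
  by exists P; rewrite /optimal P_part P_opt eqxx.
rewrite /opt; elim/big_ind: _ => [|x y [P1 h1 e1] [P2 h2 e2]|P HP].
- exists [set [set: 'I_n]] => //.
  rewrite /is_partition /partition cover1 trivIset1 eqxx /= inE eq_sym.
  by apply/set0Pn; exists i0.
- by case: (leP x y) => _; [exists P2 | exists P1].
- by exists P.
Qed.

Lemma uFA_setT_gt0 i : 0 < uFA F i [set: 'I_n].
Proof.
rewrite /uFA !setTI.
have n_gt0 : (0 < n)%N by case: i => m; case: n.
have enemies_lt_n : (#|enemies F i| < n)%N.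
  rewrite -[n in (_ < n)%N]card_ord -cardsT; apply: proper_card.
  by apply/properP; split; [exact: subsetT | exists i; rewrite // !inE eqxx orbT].
have friends_ge1 : (1 <= #|F i|)%N by rewrite card_gt0.
rewrite subr_gt0 ltr_pdivrMr ?ltr0n //.
apply: (@lt_le_trans _ _ n%:R); first by rewrite ltr_nat.
by rewrite -natrM ler_nat leq_pmull.
Qed.

Lemma opt_gt0 (i0 : 'I_n) : 0 < opt F.
Proof.
have ESW_grand_gt0 : 0 < ESW F [set [set: 'I_n]].
  rewrite /ESW; elim/big_ind: _ => [|x y hx hy|j _].
  - by rewrite ltr0n; case: i0 => m; case: n.
  - by rewrite lt_min hx hy.
  - rewrite /uP (@def_pblock _ _ [set: 'I_n]) ?trivIset1 ?inE //.
    exact: uFA_setT_gt0.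
apply: lt_le_trans ESW_grand_gt0 _; rewrite /opt.
apply: (big_rec (fun x => ESW F [set [set: 'I_n]] <= x)) => // P x _ hx.
by rewrite le_max hx orbT.
Qed.

Lemma uFA_gt0_friend i C : 0 < uFA F i C -> C :&: F i != set0.
Proof.
apply: contraTneq => CF0; rewrite /uFA CF0 cards0 sub0r -leNgt oppr_le0.
by rewrite divr_ge0 ?ler0n.
Qed.

Lemma uFA_le_subset_friends i (C D : {set 'I_n}) :
  C \subset D -> D :&: F i \subset C -> uFA F i D <= uFA F i C.
Proof.
move=> CD DFC; have DF_CF : D :&: F i = C :&: F i.
  by apply/eqP; rewrite eqEsubset subsetI DFC subsetIr setSI.
rewrite /uFA DF_CF lerD2l lerN2 ler_wpM2r ?invr_ge0 ?ler0n // ler_nat.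
by rewrite subset_leq_card // setSI.
Qed.

Lemma mem_pblock_wcc i j :
  (j \in pblock (wcc_partition F) i) = connect (weak_edge F) i j.
Proof.
apply: pblock_equivalence_partition; rewrite ?inE // => x y z _ _ _.
split=> [|xy]; first exact: connect0.
apply: same_connect => //; apply: sym_connect_sym => a b.
by rewrite /weak_edge orbC.
Qed.

Lemma F1edge_pblock_optimal P a b :
  optimal F P -> F1edge F a b -> b \in pblock P a.
Proof.
case/andP=> _ /eqP P_opt /andP[]; rewrite inE => /cards1P[f Fa].
rewrite Fa inE => /eqP ->.
have : 0 < uP F P a by apply: lt_le_trans (opt_gt0 a) _; rewrite -P_opt ESW_le_uP.
move=> /uFA_gt0_friend /set0Pn[x]; rewrite Fa in_setI in_set1.
by case/andP=> xPa /eqP xf; rewrite -xf.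
Qed.

Lemma pblock_wcc_sub_optimal P i :
  optimal F P -> pblock (wcc_partition F) i \subset pblock P i.
Proof.
move=> P_opt; have /andP[/and3P[/eqP P_cover P_triv _] _] := P_opt.
have edge_pblock a b : weak_edge F a b -> pblock P b = pblock P a.
  by case/orP=> /(F1edge_pblock_optimal P_opt) ab; [|apply/esym];
    apply: same_pblock.
apply/subsetP=> j; rewrite mem_pblock_wcc => /connectP[p p_path ->].
elim: p i p_path => [|a p IH] x /=; first by rewrite mem_pblock P_cover inE.
by case/andP=> xa p_path; rewrite -(edge_pblock _ _ xa); exact: IH.
Qed.

End FriendsAppreciation.

Theorem lemma2 (n : nat) (F : 'I_n -> {set 'I_n})
  (HFi : forall i, i \notin F i) (HFne : forall i, F i != set0) :
  forall i, i \in N1 F ->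
    opt F <= uP F (wcc_partition F) i /\
    (forall Pstar : {set {set 'I_n}}, optimal F Pstar ->
       pblock (wcc_partition F) i \subset pblock Pstar i).
Proof.
move=> i i_N1; split; last by move=> P; apply: pblock_wcc_sub_optimal.
have [P P_opt] := optimal_exists F i.
have wcc_sub_P := pblock_wcc_sub_optimal HFne i P_opt.
case/andP: (P_opt) => _ /eqP <-.
apply: le_trans (ESW_le_uP F P i) _; apply: uFA_le_subset_friends => //.
move: (i_N1); rewrite inE => /cards1P[f Fi].
have f_wcc : f \in pblock (wcc_partition F) i.
  by rewrite mem_pblock_wcc connect1 // /weak_edge /F1edge i_N1 Fi inE eqxx.
by rewrite Fi (subset_trans (subsetIr _ _)) // sub1set.
Qed.
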